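(* For integers $0\le l\le m$ let $$A_{l,m}:=l!\,m!\,2^{m+l}d_{l,m}=\frac{l!\,m!}{2^{m-l}}\sum_{k=l}^{m}2^{k}\binom{2m-2k}{m-k}\binom{m+k}{k}\binom{k}{l}.$$ Then $A_{l,m}$ is a positive integer and $$\nu_{2}(A_{l,m})=\nu_{2}\big((m+1-l)_{2l}\big)+l,$$ where $(x)_k=x(x+1)\cdots(x+k-1)$ for $k\ge1$ and $(x)_0=1$. In particular $\nu_2(A_{1,m})=\nu_2(m(m+1))+1$.
   Context: $d_{l,m}=2^{-2m}\sum_{k=l}^{m}2^{k}\binom{2m-2k}{m-k}\binom{m+k}{m}\binom{k}{l}$. For a nonzero rational $x$, $\nu_2(x)$ denotes its $2$-adic valuation (the exponent of $2$ in $x$). *)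

From HB Require Import structures.
From mathcomp Require Import all_boot all_order all_algebra.
Set Implicit Arguments. Unset Strict Implicit. Unset Printing Implicit Defensive.
Import Order.TTheory GRing.Theory Num.Theory.

Local Open Scope ring_scope.

Definition d_lm (l m : nat) : rat :=
  (2%:R ^- (2 * m)%N) *
  \sum_(l <= k < m.+1)
     ((2 ^ k * 'C(2 * m - 2 * k, m - k) * 'C(m + k, m) * 'C(k, l))%N)%:R.

Definition A_lm (l m : nat) : rat :=
  ((l`! * m`! * 2 ^ (m + l))%N)%:R * d_lm l m.

Definition rising (x k : nat) : nat := \prod_(i < k) (x + i)%N.

Definition nu2 (n : nat) : nat := logn 2 n.

(* Write n = m - l, N = m + l and reindex the sum by k = l + i (0 <= i <= n),
   j = n - i.  Clearing factorials, using C(2j,j) j! = 2^j (2j-1)!! and the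
   factorial quotients (N)!/(n)! = (n+1)_{2l}, (n)!/j! = n^_i, one finds that
   each summand, multiplied by l! m! 2^{m+l}, equals
        2^{2m} * 2^l (m+1-l)_{2l} * (2j-1)!! C(N+i,i) n^_i .
   Hence A_{l,m} = 2^l (m+1-l)_{2l} S with S = sum_i (2(n-i)-1)!! C(N+i,i) n^_i.
   S is odd: its i = 0 term (2n-1)!! is odd, the i = 1 term contains
   (N+1) n, even since N and n have the same parity, and every later term
   contains n (n-1). *)

From Stdlib Require Import ArithRing.
From HB Require Import structures.
From mathcomp Require Import all_boot all_order all_algebra zify.
Import Order.TTheory GRing.Theory Num.Theory.

Definition dfact (j : nat) : nat := \prod_(t < j) (2 * t + 1)%N.

Lemma odd_dfact j : odd (dfact j).
Proof.
elim: j => [|j IH]; first by rewrite /dfact big_ord0.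
by rewrite /dfact big_ord_recr /= oddM IH oddD oddM.
Qed.

Lemma fact_double j : ((2 * j)`! = 2 ^ j * j`! * dfact j)%N.
Proof.
elim: j => [|j IH]; first by rewrite /dfact big_ord0.
have -> : (2 * j.+1 = (2 * j).+2)%N by rewrite mulnS add2n.
rewrite !factS IH expnS /dfact big_ord_recr /= -/(dfact j).
by rewrite -!multE -!plusE; ring.
Qed.

Lemma bin_central j : ('C(2 * j, j) * j`! = 2 ^ j * dfact j)%N.
Proof.
have hj : (j <= 2 * j)%N by lia.
have := bin_fact hj; rewrite (_ : 2 * j - j = j)%N; last by lia.
rewrite fact_double mulnA [RHS]mulnAC => /eqP; rewrite eqn_pmul2r ?fact_gt0 //.
by move/eqP; lia.
Qed.

Lemma rising_fact x k : (rising x.+1 k * x`! = (x + k)`!)%N.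
Proof.
elim: k => [|k IH]; first by rewrite /rising big_ord0 mul1n addn0.
rewrite /rising big_ord_recr /= -/(rising x.+1 k) addnS factS -IH.
by rewrite -!multE -!plusE; ring.
Qed.

Lemma bin_fact_add a b : ('C(a + b, a) * (a`! * b`!) = (a + b)`!)%N.
Proof. by have := bin_fact (leq_addr b a); rewrite addKn. Qed.

(* The summand with k = l + i and m = k + j, in closed form.  Both sides are
   cleared of the denominators j! i!, after which each equals
   2^{m+l+k+j} (2j-1)!! (m+k)!. *)
Section Summand.
Variables l i j : nat.
Local Notation k := (l + i)%N.
Local Notation m := (l + i + j)%N.

Lemma summand_cleared :
  (l`! * m`! * 2 ^ (m + l) * (2 ^ k * 'C(2 * j, j) * 'C(m + k, m) * 'C(k, l))
    * (j`! * i`!) = 2 ^ (m + l + k + j) * dfact j * (m + k)`!)%N.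
Proof.
have Ek : ('C(k, l) * (l`! * i`!) = k`!)%N by rewrite bin_fact_add.
have Emk : ('C(m + k, m) * (m`! * k`!) = (m + k)`!)%N.
  exact: bin_fact_add.
rewrite -Emk -Ek (expnD 2 (m + l + k) j) -(mulnA _ (2 ^ j)) -bin_central.
by rewrite !expnD -!multE -!plusE; ring.
Qed.

Lemma closed_form_cleared :
  (2 ^ l * rising (i + j).+1 (2 * l) * (dfact j * 'C(m + l + i, i) * (i + j) ^_ i)
    * (j`! * i`!) = 2 ^ l * dfact j * (m + k)`!)%N.
Proof.
have Eff : ((i + j) ^_ i * j`! = (i + j)`!)%N.
  by have := ffact_fact (leq_addr j i); rewrite addKn.
have Er : (rising (i + j).+1 (2 * l) * (i + j)`! = (m + l)`!)%N.
  by rewrite rising_fact; congr _`!; lia.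
have Eb : ('C(m + l + i, i) * (i`! * (m + l)`!) = (m + k)`!)%N.
  by rewrite [(m + l + i)%N]addnC bin_fact_add; congr _`!; lia.
by rewrite -Eb -Er -Eff -!multE -!plusE; ring.
Qed.

Lemma scaled_summand :
  (l`! * m`! * 2 ^ (m + l) * (2 ^ k * 'C(2 * j, j) * 'C(m + k, m) * 'C(k, l))
    = 2 ^ (2 * m) * (2 ^ l * rising (i + j).+1 (2 * l)
        * (dfact j * 'C(m + l + i, i) * (i + j) ^_ i)))%N.
Proof.
apply/eqP; rewrite -(eqn_pmul2r (_ : 0 < j`! * i`!)%N) ?muln_gt0 ?fact_gt0 //.
apply/eqnP; rewrite summand_cleared -[in RHS]mulnA closed_form_cleared.
have -> : (m + l + k + j = 2 * m + l)%N by lia.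
by rewrite expnD -!multE; ring.
Qed.

End Summand.

Definition odd_cofactor (n N : nat) : nat :=
  \sum_(0 <= i < n.+1) dfact (n - i) * 'C(N + i, i) * n ^_ i.

(* S is odd whenever N and n have the same parity: only its first term is odd,
   the second contains (N+1) n and the later ones contain n (n-1). *)
Lemma odd_cofactor_odd n N : odd N = odd n -> odd (odd_cofactor n N).
Proof.
move=> parN.
have even_tail i : (0 < i)%N -> (2 %| dfact (n - i) * 'C(N + i, i) * n ^_ i)%N.
  case: i => [|[|i]] // _.
    rewrite ffactn1 addn1 bin1 -mulnA; apply: dvdn_mull.
    by rewrite dvdn2 oddM /= parN andNb.
  rewrite !ffactnS; apply: dvdn_mull; rewrite mulnA; apply: dvdn_mulr.
  by case: n {parN} => [|n] //=; rewrite dvdn2 oddM /= andNb.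
rewrite /odd_cofactor big_nat_recl // subn0 bin0 ffactn0 !muln1 oddD odd_dfact /=.
by rewrite -dvdn2; apply: dvdn_sum => i _; exact: even_tail.
Qed.

Lemma scaled_sum l m : (l <= m)%N ->
  (l`! * m`! * 2 ^ (m + l) *
    \sum_(l <= k < m.+1) (2 ^ k * 'C(2 * m - 2 * k, m - k) * 'C(m + k, m) * 'C(k, l))
   = 2 ^ (2 * m) * (2 ^ l * rising (m + 1 - l) (2 * l) * odd_cofactor (m - l) (m + l)))%N.
Proof.
move=> hlm; rewrite /odd_cofactor -[X in \sum_(X <= _ < _) _]add0n big_addn subSn //.
rewrite !big_distrr /=.
apply: eq_big_nat => i /andP[_ hi].
have [j Em] : exists j, m = (l + i + j)%N by exists (m - l - i); lia.
rewrite Em [(i + l)%N]addnC -mulnBr !addKn.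
have -> : (l + i + j + 1 - l = (i + j).+1)%N by lia.
have -> : (l + i + j - l = i + j)%N by lia.
by rewrite addKn scaled_summand.
Qed.

Lemma A_lm_factor l m : (l <= m)%N ->
  A_lm l m = ((2 ^ l * rising (m + 1 - l) (2 * l) * odd_cofactor (m - l) (m + l))%N%:R)%R.
Proof.
move=> hlm; rewrite /A_lm /d_lm -natr_sum mulrCA -natrM scaled_sum //.
by rewrite natrM natrX mulKf // expf_neq0 // pnatr_eq0.
Qed.

Lemma rising_gt0 x k : (0 < x)%N -> (0 < rising x k)%N.
Proof. by move=> x_gt0; apply: prodn_gt0 => i; rewrite addn_gt0 x_gt0. Qed.

Lemma nu2_pow2_odd e a b : (0 < a)%N -> odd b -> nu2 (2 ^ e * a * b) = (nu2 a + e)%N.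
Proof.
move=> a_gt0 b_odd; have b_gt0 := odd_gt0 b_odd.
rewrite /nu2 !lognM ?muln_gt0 ?expn_gt0 ?a_gt0 // pfactorK //.
by rewrite (logn_coprime (_ : coprime 2 b)) ?coprime2n // addn0 addnC.
Qed.

Lemma A_lm_nu2 l m : (l <= m)%N ->
  exists n : nat, (0 < n)%N /\ A_lm l m = (n%:R : rat) /\
    nu2 n = (nu2 (rising (m + 1 - l) (2 * l)) + l)%N.
Proof.
move=> hlm; have P_gt0 : (0 < rising (m + 1 - l) (2 * l))%N.
  by apply: rising_gt0; lia.
have S_odd : odd (odd_cofactor (m - l) (m + l)).
  by apply: odd_cofactor_odd; rewrite oddD oddB.
exists (2 ^ l * rising (m + 1 - l) (2 * l) * odd_cofactor (m - l) (m + l))%N.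
split; last by split; [exact: A_lm_factor | exact: nu2_pow2_odd].
by rewrite !muln_gt0 expn_gt0 P_gt0 (odd_gt0 S_odd).
Qed.

Lemma rising_two x : rising x 2 = (x * (x + 1))%N.
Proof. by rewrite /rising !big_ord_recr big_ord0 /= mul1n addn0. Qed.

Theorem mainTheorem9 :
  (forall l m : nat, (l <= m)%N ->
     exists n : nat, (0 < n)%N /\ A_lm l m = (n%:R : rat) /\
       nu2 n = (nu2 (rising (m + 1 - l) (2 * l)) + l)%N) /\
  (forall m : nat, (1 <= m)%N ->
     exists n : nat, (0 < n)%N /\ A_lm 1 m = (n%:R : rat) /\
       nu2 n = (nu2 (m * (m + 1)) + 1)%N).
Proof.
split=> [|m hm]; first exact: A_lm_nu2.
by have := A_lm_nu2 1 m hm; rewrite addnK muln1 rising_two.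
Qed.
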